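(* Let $a,A$ be real numbers with $a+3>0$ and $$\frac{a+3}{2}=\frac{2}{A+3},$$ and let $b_1,\dots,b_N$, $B_1,\dots,B_N$ be real numbers with $$\sqrt{\frac{2}{a+3}}(b_n+3)=\sqrt{\frac{2}{A+3}}(B_n+3)\qquad(n=1,\dots,N).$$ Let $\eta,\mathcal{E},\lambda_1,\dots,\lambda_N$ be real, let $l,\ell$ be real with $l+\frac12=\frac{2}{A+3}\left(\ell+\frac12\right)$, and set $$E=-\eta\left(\frac{2}{A+3}\right)^2,\quad \xi=-\mathcal{E}\left(\frac{2}{A+3}\right)^2,\quad \mu_n=\left(\frac{2}{A+3}\right)^2\lambda_n .$$ If $u\in C^2((0,\infty))$ satisfies the radial equation of $U(r)=\xi r^{a+1}+\sum_{n=1}^N\mu_n r^{b_n+1}$, $$u''(r)+\left[E-\frac{l(l+1)}{r^2}-\xi r^{a+1}-\sum_{n=1}^N\mu_n r^{b_n+1}\right]u(r)=0,$$ then $v(\rho)=\rho^{-(A+1)/4}u\!\left(\rho^{(A+3)/2}\right)$ (coordinates $r=\rho^{(A+3)/2}$, $u(r)=\rho^{(A+1)/4}v(\rho)$) satisfies the radial equation of $V(\rho)=\eta\rho^{A+1}+\sum_{n=1}^N\lambda_n\rho^{B_n+1}$: $$v''(\rho)+\left[\mathcal{E}-\frac{\ell(\ell+1)}{\rho^2}-\eta\rho^{A+1}-\sum_{n=1}^N\lambda_n\rho^{B_n+1}\right]v(\rho)=0 .$$ In this sense $U$ and $V$ are quantum Newtonianly dual, bound-state eigenfunctions of $U$ (energy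 $E$, angular quantum number $l$) being transformed into eigenfunctions of $V$ (energy $\mathcal{E}$, angular quantum number $\ell$).
   Context: Three-dimensional radial equation (units $\hbar=2m=1$): $u''+\left[E-\frac{l(l+1)}{r^2}-W(r)\right]u=0$ for a central potential $W$, with $u(r)=rR(r)$. ''General polynomial potentials'' are finite linear combinations of powers $r^{c}$ with arbitrary real exponents $c$. *)

From Stdlib Require Import Reals.
From Coquelicot Require Import Coquelicot.
Open Scope R_scope.

(* sumN N f = f 0 + f 1 + ... + f (N-1)  (indices n = 1..N of the paper shifted to 0..N-1) *)
Fixpoint sumN (N : nat) (f : nat -> R) : R :=
  match N with
  | O => 0
  | S k => sumN k f + f k
  end.

Definition C2_pos (f : R -> R) : Prop :=
  forall r, 0 < r ->
    ex_derive f r /\ ex_derive (Derive f) r /\ continuous (Derive_n f 2) r.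

(* Put r = rho^p and v(rho) = rho^q u(rho^p).  Two applications of the chain rule give
   v'' = rho^(q-2) (q(q-1) u + (2q+p-1) p r u' + p^2 r^2 u''),  evaluated at r = rho^p,
   and the choice q = (1-p)/2 kills the first-order term.  Eliminating u'' with the radial
   equation of u then yields a radial equation for v with angular coefficient
   q(q-1) + p^2 l(l+1) = ell(ell+1) (as l + 1/2 = (ell + 1/2)/p) and potential
   p^2 rho^(2p-2) (W(rho^p) - E).  Each monomial c r^(s+1) of W becomes p^2 c rho^(p(s+3)-2),
   so for p = (A+3)/2 the duality relations p(a+3) = 2 and p(b_n+3) = B_n+3 send the xi-term
   to the constant -calE, the energy E to eta rho^(A+1) and the mu_n-terms to lam_n rho^(B_n+1). *)

From Stdlib Require Import Reals Lra Lia.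
From Coquelicot Require Import Coquelicot.
Open Scope R_scope.

Lemma Rpower_gt_0 (x c : R) : 0 < Rpower x c.
Proof. apply exp_pos. Qed.

Lemma Rpower_minus_1 (x c : R) : 0 < x -> Rpower x (c - 1) = Rpower x c / x.
Proof.
  intros hx; unfold Rminus, Rdiv.
  now rewrite Rpower_plus, Rpower_Ropp, Rpower_1.
Qed.

Lemma Rpower_minus_2 (x c : R) : 0 < x -> Rpower x (c - 2) = Rpower x c / x ^ 2.
Proof.
  intros hx; replace (c - 2) with (c - 1 - 1) by ring.
  rewrite !Rpower_minus_1 by exact hx; field; lra.
Qed.

Lemma is_derive_Rpower (c x : R) :
  0 < x -> is_derive (fun y => Rpower y c) x (c * Rpower x (c - 1)).
Proof. intros hx; apply is_derive_Reals, derivable_pt_lim_power, hx. Qed.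

Lemma continuous_Rpower (c x : R) : 0 < x -> continuous (fun y => Rpower y c) x.
Proof.
  intros hx; apply (ex_derive_continuous (K := R_AbsRing) (V := R_NormedModule)).
  eexists; apply is_derive_Rpower, hx.
Qed.

(* Stated with [Rplus]/[Rmult] so that [apply] can match real-valued goals syntactically;
   Coquelicot's versions, phrased with [plus]/[mult], make unification unfold the reals. *)
Lemma continuous_Rplus (f g : R -> R) (x : R) :
  continuous f x -> continuous g x -> continuous (fun y => f y + g y) x.
Proof. apply (continuous_plus f g). Qed.

Lemma continuous_Rmult (f g : R -> R) (x : R) :
  continuous f x -> continuous g x -> continuous (fun y => f y * g y) x.
Proof. apply (continuous_mult f g). Qed.


Lemma locally_pos (x : R) : 0 < x -> locally x (fun y => 0 < y).
Proof. apply open_gt. Qed.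

Definition power_subst (q p : R) (g : R -> R) : R -> R :=
  fun x => Rpower x q * g (Rpower x p).

Lemma is_derive_power_subst (q p : R) (g : R -> R) (x dg : R) :
  0 < x -> is_derive g (Rpower x p) dg ->
  is_derive (power_subst q p g) x
    (Rpower x (q - 1) * (q * g (Rpower x p) + p * Rpower x p * dg)).
Proof.
  intros hx hg.
  pose proof (is_derive_comp g _ x _ _ hg (is_derive_Rpower p x hx)) as hcomp.
  pose proof (is_derive_mult _ _ x _ _ (is_derive_Rpower q x hx) hcomp Rmult_comm) as hmul.
  replace (Rpower x (q - 1) * _) with (q * Rpower x (q - 1) * g (Rpower x p)
     + Rpower x q * (p * Rpower x (p - 1) * dg)); [exact hmul |].
  rewrite !Rpower_minus_1 by exact hx; field; lra.
Qed.

Lemma continuous_power_subst (q p : R) (g : R -> R) (x : R) :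
  0 < x -> continuous g (Rpower x p) -> continuous (power_subst q p g) x.
Proof.
  intros hx hg.
  apply (continuous_Rmult (fun y => Rpower y q) (fun y => g (Rpower y p))).
  - apply continuous_Rpower, hx.
  - apply (continuous_comp (fun y => Rpower y p) g); [apply continuous_Rpower, hx | exact hg].
Qed.

Section PowerSubstC2.

Variables (q p : R) (u : R -> R).
Hypothesis hu : C2_pos u.

Definition power_subst_first (y : R) : R := q * u y + p * y * Derive u y.

Definition power_subst_second (y : R) : R :=
  q * (q - 1) * u y + (2 * q + p - 1) * p * y * Derive u y
  + p ^ 2 * y ^ 2 * Derive_n u 2 y.

Lemma Derive_power_subst (x : R) :
  0 < x -> Derive (power_subst q p u) x = power_subst (q - 1) p power_subst_first x.
Proof.
  intros hx; apply is_derive_unique, is_derive_power_subst; [exact hx |].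
  apply Derive_correct, hu, Rpower_gt_0.
Qed.

Lemma locally_Derive_power_subst (x : R) : 0 < x ->
  locally x (fun y => Derive (power_subst q p u) y = power_subst (q - 1) p power_subst_first y).
Proof.
  intros hx; eapply filter_imp; [| apply locally_pos, hx]; exact Derive_power_subst.
Qed.

Lemma is_derive_power_subst_first (y : R) : 0 < y ->
  is_derive power_subst_first y ((q + p) * Derive u y + p * y * Derive (Derive u) y).
Proof.
  intros hy; destruct (hu y hy) as [hu1 [hu2 _]].
  pose proof (is_derive_plus _ _ y _ _
    (is_derive_scal u y q _ (Derive_correct u y hu1))
    (is_derive_mult (fun z => p * z) (Derive u) y _ _
       (is_derive_scal (fun z => z) y p _ (is_derive_id y))
       (Derive_correct _ y hu2) Rmult_comm)) as h.
  replace ((q + p) * _ + _) with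
    (q * Derive u y + (p * one * Derive u y + p * y * Derive (Derive u) y));
    [exact h | unfold one; simpl; ring].
Qed.

Lemma is_derive_Derive_power_subst (x : R) : 0 < x ->
  is_derive (Derive (power_subst q p u)) x (power_subst (q - 2) p power_subst_second x).
Proof.
  intros hx.
  eapply is_derive_ext_loc.
  { eapply filter_imp; [| apply locally_Derive_power_subst, hx].
    intros y hy; symmetry; exact hy. }
  replace (power_subst (q - 2) p power_subst_second x) with
    (Rpower x (q - 1 - 1) * ((q - 1) * power_subst_first (Rpower x p)
       + p * Rpower x p * ((q + p) * Derive u (Rpower x p)
                           + p * Rpower x p * Derive (Derive u) (Rpower x p)))).
  { apply is_derive_power_subst; [exact hx |].
    apply is_derive_power_subst_first, Rpower_gt_0. }
  unfold power_subst, power_subst_second, power_subst_first.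
  change (Derive_n u 2) with (Derive (Derive u)).
  replace (q - 1 - 1) with (q - 2) by ring; ring.
Qed.

Lemma Derive_n_power_subst (x : R) :
  0 < x -> Derive_n (power_subst q p u) 2 x = power_subst (q - 2) p power_subst_second x.
Proof. intros hx; apply is_derive_unique, is_derive_Derive_power_subst, hx. Qed.

Lemma continuous_power_subst_second (y : R) : 0 < y -> continuous power_subst_second y.
Proof.
  intros hy; destruct (hu y hy) as [hu1 [hu2 hu3]].
  pose proof (ex_derive_continuous (K := R_AbsRing) (V := R_NormedModule) u y hu1).
  pose proof (ex_derive_continuous (K := R_AbsRing) (V := R_NormedModule) _ y hu2).
  unfold power_subst_second.
  repeat first
    [ apply continuous_const
    | apply continuous_id
    | assumption
    | apply continuous_Rplus
    | apply continuous_Rmult ].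
Qed.

Lemma C2_pos_power_subst : C2_pos (power_subst q p u).
Proof.
  intros x hx; split; [| split].
  - eexists; apply is_derive_power_subst; [exact hx |].
    apply Derive_correct, hu, Rpower_gt_0.
  - eexists; apply is_derive_Derive_power_subst, hx.
  - eapply continuous_ext_loc.
    { eapply filter_imp; [| apply locally_pos, hx].
      intros y hy; symmetry; apply Derive_n_power_subst, hy. }
    apply continuous_power_subst; [exact hx |].
    apply continuous_power_subst_second, Rpower_gt_0.
Qed.

End PowerSubstC2.

Definition radial_equation (E l : R) (W u : R -> R) : Prop :=
  forall r, 0 < r -> Derive_n u 2 r + (E - l * (l + 1) / r ^ 2 - W r) * u r = 0.

Lemma radial_equation_ext (E E' l : R) (W W' u : R -> R) :
  (forall r, 0 < r -> W r - E = W' r - E') ->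
  radial_equation E l W u -> radial_equation E' l W' u.
Proof.
  intros hW hu r hr.
  replace (E' - l * (l + 1) / r ^ 2 - W' r) with (E - l * (l + 1) / r ^ 2 - W r)
    by (pose proof (hW r hr); lra).
  exact (hu r hr).
Qed.

Lemma Rpower_twice_minus_2 (x p : R) : 0 < x -> Rpower x (2 * p - 2) = Rpower x p ^ 2 / x ^ 2.
Proof.
  intros hx; rewrite Rpower_minus_2 by exact hx.
  replace (2 * p) with (p + p) by ring; rewrite Rpower_plus; simpl; field; lra.
Qed.

Lemma radial_equation_power_subst (p E l ell : R) (W u : R -> R) :
  p * (l + 1 / 2) = ell + 1 / 2 -> C2_pos u -> radial_equation E l W u ->
  radial_equation 0 ell (fun x => p ^ 2 * Rpower x (2 * p - 2) * (W (Rpower x p) - E))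
    (power_subst ((1 - p) / 2) p u).
Proof.
  intros hl hu hequ x hx.
  set (X := Rpower x p).
  assert (hX : 0 < X) by apply Rpower_gt_0.
  assert (hu2 : Derive_n u 2 X = - (E - l * (l + 1) / X ^ 2 - W X) * u X)
    by (pose proof (hequ X hX); lra).
  rewrite Derive_n_power_subst, Rpower_twice_minus_2 by assumption.
  unfold power_subst, power_subst_second; fold X.
  rewrite hu2, Rpower_minus_2 by exact hx.
  replace ell with (p * l + p / 2 - 1 / 2) by lra.
  field; split; lra.
Qed.

Lemma sumN_mul_l (N : nat) (c : R) (f : nat -> R) :
  c * sumN N f = sumN N (fun n => c * f n).
Proof. induction N as [| N IH]; simpl; [ring | rewrite <- IH; ring]. Qed.

Lemma sumN_ext_lt (N : nat) (f g : nat -> R) :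
  (forall n, (n < N)%nat -> f n = g n) -> sumN N f = sumN N g.
Proof.
  induction N as [| N IH]; intros hfg; simpl; [reflexivity |].
  rewrite IH, hfg; [reflexivity | lia | intros n hn; apply hfg; lia].
Qed.

Lemma dual_exponents (a A : R) :
  0 < a + 3 -> (a + 3) / 2 = 2 / (A + 3) -> 0 < A + 3 /\ (A + 3) / 2 * (a + 3) = 2.
Proof.
  intros ha haA.
  assert (hA0 : A + 3 <> 0).
  { intros h; rewrite h in haA; unfold Rdiv in haA; rewrite Rinv_0 in haA; lra. }
  assert (hprod : (A + 3) / 2 * (a + 3) = 2).
  { replace ((A + 3) / 2 * (a + 3)) with ((a + 3) / 2 * (A + 3)) by field.
    rewrite haA; field; exact hA0. }
  split; [| exact hprod].
  assert (0 < (A + 3) / 2) by (set (t := (A + 3) / 2) in *; nra); lra.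
Qed.

Lemma sqrt_scaled_eq (p x y : R) : 0 < p -> sqrt p * x = sqrt (/ p) * y -> p * x = y.
Proof.
  intros hp h.
  rewrite sqrt_inv in h.
  pose proof (sqrt_lt_R0 p hp) as hs.
  pose proof (sqrt_sqrt p (Rlt_le _ _ hp)) as hss.
  rewrite <- hss, Rmult_assoc, h; field; lra.
Qed.

Lemma Rpower_dual_monomial (x p c : R) :
  0 < x -> Rpower x (2 * p - 2) * Rpower (Rpower x p) (c + 1) = Rpower x (p * (c + 3) - 2).
Proof.
  intros hx; rewrite Rpower_mult, <- Rpower_plus; f_equal; ring.
Qed.

Lemma dual_potential (N : nat) (p a : R) (b B lam : nat -> R) (eta calE x : R) :
  0 < p -> 0 < x -> p * (a + 3) = 2 ->
  (forall n, (n < N)%nat -> p * (b n + 3) = B n + 3) ->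
  p ^ 2 * Rpower x (2 * p - 2) *
    (- calE * (/ p) ^ 2 * Rpower (Rpower x p) (a + 1)
     + sumN N (fun n => (/ p) ^ 2 * lam n * Rpower (Rpower x p) (b n + 1))
     - - eta * (/ p) ^ 2)
  = eta * Rpower x (2 * p - 2) + sumN N (fun n => lam n * Rpower x (B n + 1)) - calE.
Proof.
  intros hp hx hpa hpb.
  rewrite Rmult_minus_distr_l, Rmult_plus_distr_l, sumN_mul_l.
  rewrite (sumN_ext_lt N _ (fun n => lam n * Rpower x (B n + 1))).
  - replace (p ^ 2 * Rpower x (2 * p - 2) * (- calE * (/ p) ^ 2 * Rpower (Rpower x p) (a + 1)))
      with (- calE * (p * / p) ^ 2 * (Rpower x (2 * p - 2) * Rpower (Rpower x p) (a + 1)))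
      by ring.
    rewrite Rpower_dual_monomial, hpa, Rminus_diag, Rpower_O by exact hx.
    field; lra.
  - intros n hn.
    replace (p ^ 2 * Rpower x (2 * p - 2) * ((/ p) ^ 2 * lam n * Rpower (Rpower x p) (b n + 1)))
      with (lam n * (p * / p) ^ 2 * (Rpower x (2 * p - 2) * Rpower (Rpower x p) (b n + 1)))
      by ring.
    rewrite Rpower_dual_monomial, hpb by assumption.
    replace (B n + 3 - 2) with (B n + 1) by ring.
    field; lra.
Qed.

Theorem mainTheorem5
  (a A : R) (N : nat) (b B lam : nat -> R)
  (eta calE l ell : R) (u : R -> R)
  (ha : 0 < a + 3)
  (haA : (a + 3) / 2 = 2 / (A + 3))
  (hbB : forall n, (n < N)%nat ->
           sqrt (2 / (a + 3)) * (b n + 3) = sqrt (2 / (A + 3)) * (B n + 3))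
  (hl : l + 1/2 = 2 / (A + 3) * (ell + 1/2))
  (hu : C2_pos u)
  (hequ : forall r, 0 < r ->
     Derive_n u 2 r
     + ((- eta * (2 / (A + 3)) ^ 2) - l * (l + 1) / r ^ 2
        - (- calE * (2 / (A + 3)) ^ 2) * Rpower r (a + 1)
        - sumN N (fun n => ((2 / (A + 3)) ^ 2 * lam n) * Rpower r (b n + 1)))
       * u r = 0) :
  let v := fun rho => Rpower rho (- (A + 1) / 4) * u (Rpower rho ((A + 3) / 2)) in
  C2_pos v /\
  (forall rho, 0 < rho ->
     Derive_n v 2 rho
     + (calE - ell * (ell + 1) / rho ^ 2
        - eta * Rpower rho (A + 1)
        - sumN N (fun n => lam n * Rpower rho (B n + 1)))
       * v rho = 0).
Proof.
  intros v.
  destruct (dual_exponents a A ha haA) as [hA hpa].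
  change v with (power_subst (- (A + 1) / 4) ((A + 3) / 2) u).
  set (p := (A + 3) / 2) in *.
  assert (hp : 0 < p) by (unfold p; lra).
  assert (hk : 2 / (A + 3) = / p) by (unfold p; field; lra).
  assert (hpb : forall n, (n < N)%nat -> p * (b n + 3) = B n + 3).
  { intros n hn; apply sqrt_scaled_eq; [exact hp |].
    rewrite <- hk, <- (hbB n hn); do 2 f_equal.
    rewrite <- hpa; field; lra. }
  assert (hell : p * (l + 1 / 2) = ell + 1 / 2) by (rewrite hl, hk; field; lra).
  assert (hu_rad : radial_equation (- eta * (/ p) ^ 2) l
    (fun r => - calE * (/ p) ^ 2 * Rpower r (a + 1)
              + sumN N (fun n => (/ p) ^ 2 * lam n * Rpower r (b n + 1))) u).
  { intros r hr; pose proof (hequ r hr) as h; rewrite hk in h; lra. }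
  pose proof (radial_equation_power_subst p _ _ _ _ _ hell hu hu_rad) as hv.
  replace ((1 - p) / 2) with (- (A + 1) / 4) in hv by (unfold p; field).
  split; [apply C2_pos_power_subst, hu |].
  apply (radial_equation_ext _ calE _ _
           (fun x => eta * Rpower x (A + 1) + sumN N (fun n => lam n * Rpower x (B n + 1)))) in hv.
  - intros rho hr; pose proof (hv rho hr); lra.
  - intros x hx; rewrite Rminus_0_r, (dual_potential N p a b B) by assumption.
    replace (2 * p - 2) with (A + 1) by (unfold p; field); reflexivity.
Qed.
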